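(* Let $\underline{\theta} < 0 < \overline{\theta}$ and $\underline{\delta B} < 0 < \overline{\delta B}$ be real numbers. Work in $\mathbb{R}^5$ with coordinates $(\psi, z^{+}, z^{-}, \theta, \delta p)$ and define the three polytopes $$\mathcal{P}_{0,0,0} = \{(\psi,z^+,z^-)=(0,0,0),\ \delta p = 0,\ \underline{\theta} \le \theta \le \overline{\theta}\},$$ $$\mathcal{P}_{1,1,0} = \{(\psi,z^+,z^-)=(1,1,0),\ \underline{\delta B}\,\theta \le \delta p \le \overline{\delta B}\,\theta,\ 0 \le \theta \le \overline{\theta}\},$$ $$\mathcal{P}_{1,0,1} = \{(\psi,z^+,z^-)=(1,0,1),\ \overline{\delta B}\,\theta \le \delta p \le \underline{\delta B}\,\theta,\ \underline{\theta} \le \theta \le 0\},$$ and let $\mathcal{P} = \operatorname{conv}(\mathcal{P}_{0,0,0} \cup \mathcal{P}_{1,1,0} \cup \mathcal{P}_{1,0,1})$. Then each of the following inequalities is facet-defining for $\mathcal{P}$ (i.e. valid for $\mathcal{P}$, and the face of $\mathcal{P}$ on which it holds with equality has dimension $\dim \mathcal{P} - 1$): 1. $\underline{\theta} z^{+} + \theta \ge \underline{\theta}$; 2. $\overline{\theta} z^{-} + \theta \le \overline{\theta}$; 3. $-\overline{\theta}\,\underline{\delta B}\, z^{+} - \underline{\theta}\,\overline{\delta B}\, z^{-} + \delta p \ge 0$; 4. $-\overline{\theta}\,\overline{\delta B}\, z^{+} - \underline{\theta}\,\underline{\delta B}\, z^{-} + \delta p \le 0$; 5. $\overline{\theta}\,\underline{\delta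 B}\, z^{+} + \overline{\theta}\,\overline{\delta B}\, z^{-} + \overline{\delta B}\,\theta - \delta p \le \overline{\theta}\,\overline{\delta B}$; 6. $\overline{\theta}\,\overline{\delta B}\, z^{+} + \overline{\theta}\,\underline{\delta B}\, z^{-} + \underline{\delta B}\,\theta - \delta p \ge \overline{\theta}\,\underline{\delta B}$; 7. $\underline{\theta}\,\overline{\delta B}\, z^{+} + \underline{\theta}\,\underline{\delta B}\, z^{-} + \overline{\delta B}\,\theta - \delta p \ge \underline{\theta}\,\overline{\delta B}$; 8. $\underline{\theta}\,\underline{\delta B}\, z^{+} + \underline{\theta}\,\overline{\delta B}\, z^{-} + \underline{\delta B}\,\theta - \delta p \le \underline{\theta}\,\underline{\delta B}$.
   Context: This models a single transmission branch with a FACTS device: $\psi$ indicates installation of the device, $z^+$ (resp. $z^-$) indicates that the device is installed and the phase angle difference $\theta$ is nonnegative (resp. nonpositive), $\delta p$ is the change in power flow induced by the device, $[\underline{\theta},\overline{\theta}]$ are the bounds on the angle difference and $[\underline{\delta B},\overline{\delta B}]$ the bounds on the susceptance change. The polytope $\mathcal{P}$ satisfies the equation $\psi = z^+ + z^-$. *)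

From mathcomp Require Import all_boot all_order all_algebra.
Set Implicit Arguments. Unset Strict Implicit. Unset Printing Implicit Defensive.
Import Order.TTheory GRing.Theory Num.Theory.
Local Open Scope ring_scope.

Section Defs.
Variable R : realFieldType.

Definition vpsi (x : 'rV[R]_5) : R := x ord0 (inord 0).
Definition vzp  (x : 'rV[R]_5) : R := x ord0 (inord 1).
Definition vzm  (x : 'rV[R]_5) : R := x ord0 (inord 2).
Definition vth  (x : 'rV[R]_5) : R := x ord0 (inord 3).
Definition vdp  (x : 'rV[R]_5) : R := x ord0 (inord 4).

Definition conv (S : 'rV[R]_5 -> Prop) : 'rV[R]_5 -> Prop :=
  fun x => exists (n : nat) (w : 'I_n -> R) (p : 'I_n -> 'rV[R]_5),
    (forall i, 0 <= w i) /\ \sum_(i < n) w i = 1 /\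
    (forall i, S (p i)) /\ x = \sum_(i < n) w i *: p i.

Definition aff_indep_in (S : 'rV[R]_5 -> Prop) (m : nat) : Prop :=
  exists p : 'I_m.+1 -> 'rV[R]_5,
    (forall i, S (p i)) /\
    row_free (\matrix_(i < m) (p (lift ord0 i) - p ord0)).

Definition affdim (S : 'rV[R]_5 -> Prop) (d : nat) : Prop :=
  aff_indep_in S d /\ (forall m, aff_indep_in S m -> (m <= d)%N).

Definition facet_le (P : 'rV[R]_5 -> Prop) (g : 'rV[R]_5 -> R) (b : R) : Prop :=
  (forall x, P x -> g x <= b) /\
  exists d : nat, affdim P d.+1 /\ affdim (fun x => P x /\ g x = b) d.

Definition facet_ge (P : 'rV[R]_5 -> Prop) (g : 'rV[R]_5 -> R) (b : R) : Prop :=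
  (forall x, P x -> b <= g x) /\
  exists d : nat, affdim P d.+1 /\ affdim (fun x => P x /\ g x = b) d.

Definition P000 (thl thu : R) (x : 'rV[R]_5) : Prop :=
  vpsi x = 0 /\ vzp x = 0 /\ vzm x = 0 /\ vdp x = 0 /\ thl <= vth x <= thu.
Definition P110 (thu dBl dBu : R) (x : 'rV[R]_5) : Prop :=
  vpsi x = 1 /\ vzp x = 1 /\ vzm x = 0 /\
  dBl * vth x <= vdp x <= dBu * vth x /\ 0 <= vth x <= thu.
Definition P101 (thl dBl dBu : R) (x : 'rV[R]_5) : Prop :=
  vpsi x = 1 /\ vzp x = 0 /\ vzm x = 1 /\
  dBu * vth x <= vdp x <= dBl * vth x /\ thl <= vth x <= 0.

Definition Pfacts (thl thu dBl dBu : R) : 'rV[R]_5 -> Prop :=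
  conv (fun x => P000 thl thu x \/ P110 thu dBl dBu x \/ P101 thl dBl dBu x).
End Defs.

From mathcomp Require Import all_boot all_order all_algebra.
From mathcomp Require Import ring lra.
Set Implicit Arguments. Unset Strict Implicit. Unset Printing Implicit Defensive.
Import Order.TTheory GRing.Theory Num.Theory.
Local Open Scope ring_scope.

(* The three pieces lie in the hyperplane psi = z+ + z-, hence so does P, and five of
   their vertices are affinely independent, so dim P = 4.  Each inequality is linear,
   hence valid on P as soon as it is valid on the three pieces.  It does not involve psi,
   so its face lies in two independent hyperplanes and has dimension at most 3; four
   affinely independent vertices on which it is tight give dimension exactly 3.  Upper
   bounds on affine dimension come from rank-nullity: differences of points of the affine
   subspace {x | x *m C^T = b} lie in the kernel of C^T. *)

Section Coordinates.
Variable R : realFieldType.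

Definition vec5 (a b c d e : R) : 'rV[R]_5 := \row_(j < 5) nth 0 [:: a; b; c; d; e] j.

Lemma vpsi_vec5 a b c d e : vpsi (vec5 a b c d e) = a.
Proof. by rewrite /vpsi mxE inordK. Qed.
Lemma vzp_vec5 a b c d e : vzp (vec5 a b c d e) = b.
Proof. by rewrite /vzp mxE inordK. Qed.
Lemma vzm_vec5 a b c d e : vzm (vec5 a b c d e) = c.
Proof. by rewrite /vzm mxE inordK. Qed.
Lemma vth_vec5 a b c d e : vth (vec5 a b c d e) = d.
Proof. by rewrite /vth mxE inordK. Qed.
Lemma vdp_vec5 a b c d e : vdp (vec5 a b c d e) = e.
Proof. by rewrite /vdp mxE inordK. Qed.

Definition vec5E := (vpsi_vec5, vzp_vec5, vzm_vec5, vth_vec5, vdp_vec5).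

Lemma vec5D a b c d e a' b' c' d' e' :
  vec5 a b c d e + vec5 a' b' c' d' e' = vec5 (a + a') (b + b') (c + c') (d + d') (e + e').
Proof. by apply/rowP => -[[|[|[|[|[|//]]]]] ?]; rewrite !mxE. Qed.

Lemma vec5B a b c d e a' b' c' d' e' :
  vec5 a b c d e - vec5 a' b' c' d' e' = vec5 (a - a') (b - b') (c - c') (d - d') (e - e').
Proof. by apply/rowP => -[[|[|[|[|[|//]]]]] ?]; rewrite !mxE. Qed.

Lemma vec5Z k a b c d e :
  k *: vec5 a b c d e = vec5 (k * a) (k * b) (k * c) (k * d) (k * e).
Proof. by apply/rowP => -[[|[|[|[|[|//]]]]] ?]; rewrite !mxE. Qed.

Lemma vec5_eq0 a b c d e :
  vec5 a b c d e = 0 -> [/\ a = 0, b = 0, c = 0, d = 0 & e = 0].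
Proof.
move=> v0; have := congr1 (@vpsi R) v0; have := congr1 (@vzp R) v0.
have := congr1 (@vzm R) v0; have := congr1 (@vth R) v0; have := congr1 (@vdp R) v0.
by rewrite /vpsi /vzp /vzm /vth /vdp !mxE !inordK.
Qed.

Lemma vec5_eta x : x = vec5 (vpsi x) (vzp x) (vzm x) (vth x) (vdp x).
Proof.
apply/rowP => j; rewrite !mxE /vpsi /vzp /vzm /vth /vdp.
have coord k (lt_k5 : (k < 5)%N) : x 0 (Ordinal lt_k5) = x ord0 (inord k).
  by congr (x _ _); apply: val_inj; rewrite /= inordK.
by case: j => -[|[|[|[|[|//]]]]] ?; rewrite coord.
Qed.

Definition lform (c x : 'rV[R]_5) : R := (x *m c^T) 0 0.

Lemma lform_vec5 a b c d e x :
  lform (vec5 a b c d e) x = a * vpsi x + b * vzp x + c * vzm x + d * vth x + e * vdp x.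
Proof.
rewrite {1}[x]vec5_eta /lform mxE !big_ord_recl big_ord0 /vec5 !mxE /=; ring.
Qed.
End Coordinates.

Lemma row_free_pair (F : fieldType) n (h g : 'rV[F]_n) j :
  h 0 j != 0 -> g 0 j = 0 -> g != 0 -> row_free (col_mx h g).
Proof.
move=> hj0 gj0 g0; apply: inj_row_free => v.
rewrite -[v]hsubmxK mul_row_col [lsubmx v]mx11_scalar [rsubmx v]mx11_scalar.
move: (lsubmx v 0 0) (rsubmx v 0 0) => a b; rewrite !mul_scalar_mx => comb0.
have a0 : a = 0.
  move/rowP/(_ j): comb0; rewrite !mxE gj0 mulr0 addr0 => /eqP.
  by rewrite mulf_eq0 (negbTE hj0) orbF => /eqP.
move: comb0; rewrite a0 scale0r add0r => /eqP.
rewrite scaler_eq0 (negbTE g0) orbF => /eqP ->.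
by rewrite !raddf0 row_mx0.
Qed.

Section Convex.
Variable R : realFieldType.
Implicit Types (S : 'rV[R]_5 -> Prop) (x : 'rV[R]_5).

Lemma mem_conv S x : S x -> conv S x.
Proof.
move=> Sx; exists 1%N, (fun _ => 1), (fun _ => x).
by split=> [_|]; rewrite ?ler01 // !big_ord1 scale1r.
Qed.

Lemma lform_sum c n (w : 'I_n -> R) (p : 'I_n -> 'rV_5) :
  lform c (\sum_(i < n) w i *: p i) = \sum_(i < n) w i * lform c (p i).
Proof.
rewrite /lform mulmx_suml summxE; apply: eq_bigr => i _.
by rewrite -scalemxAl mxE.
Qed.

Lemma conv_lform_le S c b x :
  (forall y, S y -> lform c y <= b) -> conv S x -> lform c x <= b.
Proof.
move=> le_b [n [w [p [w_ge0 [w_sum1 [Sp ->]]]]]].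
rewrite lform_sum -[b]mul1r -w_sum1 mulr_suml.
by apply: ler_sum => i _; rewrite ler_wpM2l ?le_b.
Qed.

Lemma conv_lform_ge S c b x :
  (forall y, S y -> b <= lform c y) -> conv S x -> b <= lform c x.
Proof.
move=> ge_b [n [w [p [w_ge0 [w_sum1 [Sp ->]]]]]].
rewrite lform_sum -[b]mul1r -w_sum1 mulr_suml.
by apply: ler_sum => i _; rewrite ler_wpM2l ?ge_b.
Qed.

Lemma conv_lform_eq S c b x :
  (forall y, S y -> lform c y = b) -> conv S x -> lform c x = b.
Proof.
move=> eq_b Sx; apply/eqP; rewrite eq_le.
by rewrite (conv_lform_le _ Sx) ?(conv_lform_ge _ Sx) // => y /eq_b ->.
Qed.

Lemma aff_indep_in_le_corank S k m (C : 'M[R]_(k, 5)) b :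
  (forall x, S x -> x *m C^T = b) -> aff_indep_in S m -> (m <= 5 - \rank C)%N.
Proof.
move=> SC [p [Sp /eqP <-]]; rewrite -(mxrank_tr C) -mxrank_ker; apply: mxrankS.
by apply/row_subP => i; rewrite rowK sub_kermx mulmxBl !SC // subrr.
Qed.

Lemma aff_indep_in_le_hyperplane S h b m :
  h != 0 -> (forall x, S x -> lform h x = b) -> aff_indep_in S m -> (m <= 4)%N.
Proof.
move=> h0 Sh /(aff_indep_in_le_corank (C := h) (b := b%:M)); rewrite rank_rV h0; apply.
by move=> x Sx; rewrite [LHS]mx11_scalar -/(lform h x) Sh.
Qed.

Lemma aff_indep_in_le_codim2 S h g a b m :
  row_free (col_mx h g) -> (forall x, S x -> lform h x = a /\ lform g x = b) ->
  aff_indep_in S m -> (m <= 3)%N.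
Proof.
move=> /eqP hg_rk Sgh.
move/(aff_indep_in_le_corank (C := col_mx h g) (b := row_mx a%:M b%:M)).
rewrite hg_rk; apply=> x /Sgh[hx gx].
rewrite tr_col_mx mul_mx_row [x *m h^T]mx11_scalar [x *m g^T]mx11_scalar.
by rewrite -/(lform h x) -/(lform g x) hx gx.
Qed.

Lemma aff_indep_in3 S p0 p1 p2 p3 :
  S p0 -> S p1 -> S p2 -> S p3 ->
  (forall a b c, a *: (p1 - p0) + b *: (p2 - p0) + c *: (p3 - p0) = 0 ->
     [/\ a = 0, b = 0 & c = 0]) ->
  aff_indep_in S 3.
Proof.
move=> S0 S1 S2 S3 indep; exists (fun i : 'I_4 => nth 0 [:: p0; p1; p2; p3] i).
split=> [[[|[|[|[|//]]]] ?] //|]; apply: inj_row_free => u.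
rewrite mulmx_sum_row !big_ord_recl big_ord0 !rowK /= addr0 addrA.
move/indep=> [u0 u1 u2]; apply/rowP => -[[|[|[|//]]] ?]; rewrite mxE;
  [rewrite -u0 | rewrite -u1 | rewrite -u2]; congr (u _ _); exact: val_inj.
Qed.

Lemma aff_indep_in4 S p0 p1 p2 p3 p4 :
  S p0 -> S p1 -> S p2 -> S p3 -> S p4 ->
  (forall a b c d,
     a *: (p1 - p0) + b *: (p2 - p0) + c *: (p3 - p0) + d *: (p4 - p0) = 0 ->
     [/\ a = 0, b = 0, c = 0 & d = 0]) ->
  aff_indep_in S 4.
Proof.
move=> S0 S1 S2 S3 S4 indep; exists (fun i : 'I_5 => nth 0 [:: p0; p1; p2; p3; p4] i).
split=> [[[|[|[|[|[|//]]]]] ?] //|]; apply: inj_row_free => u.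
rewrite mulmx_sum_row !big_ord_recl big_ord0 !rowK /= addr0 !addrA.
move/indep=> [u0 u1 u2 u3]; apply/rowP => -[[|[|[|[|//]]]] ?]; rewrite mxE;
  [rewrite -u0 | rewrite -u1 | rewrite -u2 | rewrite -u3]; congr (u _ _); exact: val_inj.
Qed.
End Convex.

Section Facets.
Variables (R : realFieldType) (thl thu dBl dBu : R).
Hypotheses (thl_lt0 : thl < 0) (thu_gt0 : 0 < thu) (dBl_lt0 : dBl < 0) (dBu_gt0 : 0 < dBu).

Local Notation U := (fun x => P000 thl thu x \/ P110 thu dBl dBu x \/ P101 thl dBl dBu x).
Local Notation P := (Pfacts thl thu dBl dBu).
Local Notation face g b := (fun x => P x /\ g x = b).

(* lra and nra do not see section hypotheses. *)
Ltac signs := move: (thl_lt0) (thu_gt0) (dBl_lt0) (dBu_gt0) => ? ? ? ?.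

Lemma P000_in_P th : thl <= th -> th <= thu -> P (vec5 0 0 0 th 0).
Proof. by move=> ? ?; apply/mem_conv; left; rewrite /P000 !vec5E; do !split; apply/andP. Qed.

Lemma P110_in_P th dp :
  0 <= th -> th <= thu -> dBl * th <= dp -> dp <= dBu * th -> P (vec5 1 1 0 th dp).
Proof.
by move=> ? ? ? ?; apply/mem_conv; right; left; rewrite /P110 !vec5E; do !split; apply/andP.
Qed.

Lemma P101_in_P th dp :
  thl <= th -> th <= 0 -> dBu * th <= dp -> dp <= dBl * th -> P (vec5 1 0 1 th dp).
Proof.
by move=> ? ? ? ?; apply/mem_conv; right; right; rewrite /P101 !vec5E; do !split; apply/andP.
Qed.

Local Notation x000_lo := (vec5 0 0 0 thl 0).
Local Notation x000_0 := (vec5 0 0 0 0 0).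
Local Notation x000_hi := (vec5 0 0 0 thu 0).
Local Notation x110_0 := (vec5 1 1 0 0 0).
Local Notation x110_lo := (vec5 1 1 0 thu (dBl * thu)).
Local Notation x110_hi := (vec5 1 1 0 thu (dBu * thu)).
Local Notation x101_0 := (vec5 1 0 1 0 0).
Local Notation x101_lo := (vec5 1 0 1 thl (dBu * thl)).
Local Notation x101_hi := (vec5 1 0 1 thl (dBl * thl)).

Lemma x000_lo_in_P : P x000_lo. Proof. by apply: P000_in_P; signs; lra. Qed.
Lemma x000_0_in_P : P x000_0. Proof. by apply: P000_in_P; signs; lra. Qed.
Lemma x000_hi_in_P : P x000_hi. Proof. by apply: P000_in_P; signs; lra. Qed.
Lemma x110_0_in_P : P x110_0. Proof. by apply: P110_in_P; signs; nra. Qed.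
Lemma x110_lo_in_P : P x110_lo. Proof. by apply: P110_in_P; signs; nra. Qed.
Lemma x110_hi_in_P : P x110_hi. Proof. by apply: P110_in_P; signs; nra. Qed.
Lemma x101_0_in_P : P x101_0. Proof. by apply: P101_in_P; signs; nra. Qed.
Lemma x101_lo_in_P : P x101_lo. Proof. by apply: P101_in_P; signs; nra. Qed.
Lemma x101_hi_in_P : P x101_hi. Proof. by apply: P101_in_P; signs; nra. Qed.

#[local] Hint Resolve x000_lo_in_P x000_0_in_P x000_hi_in_P x110_0_in_P x110_lo_in_P
  x110_hi_in_P x101_0_in_P x101_lo_in_P x101_hi_in_P : core.

Lemma vpsi_P x : P x -> vpsi x = vzp x + vzm x.
Proof.
move=> Px; have: lform (vec5 1 (-1) (-1) 0 0) x = 0.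
  by apply: conv_lform_eq Px => y; rewrite lform_vec5 => -[|[|]] [-> [-> [-> _]]]; ring.
rewrite lform_vec5; lra.
Qed.

Lemma affdim_P : affdim P 4.
Proof.
split.
  apply: (aff_indep_in4 x000_0_in_P x000_hi_in_P x110_0_in_P x110_hi_in_P x101_0_in_P).
  move=> a b c d; rewrite !vec5B !vec5Z !vec5D => /vec5_eq0[? ? ? ? ?]; signs.
  have : 0 < dBu * thu by nra.
  by split; nra.
move=> m; apply: (aff_indep_in_le_hyperplane (h := vec5 1 (-1) (-1) 0 0) (b := 0)).
  by apply/eqP => /vec5_eq0[]; lra.
by move=> x /vpsi_P; rewrite lform_vec5 => ->; ring.
Qed.

Lemma face_codim1 g a b t d e :
  (forall x, g x = a * vzp x + b * vzm x + t * vth x + d * vdp x) ->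
  (t != 0) || (d != 0) -> aff_indep_in (face g e) 3 ->
  exists k, affdim P k.+1 /\ affdim (face g e) k.
Proof.
move=> gE td face3; exists 3%N; split; first exact: affdim_P.
split=> // m; apply: (aff_indep_in_le_codim2 (h := vec5 1 (-1) (-1) 0 0)
  (g := vec5 0 a b t d) (a := 0) (b := e)).
  apply: (row_free_pair (j := inord 0)); rewrite ?mxE ?inordK ?oner_eq0 //.
  by apply/eqP => /vec5_eq0[_ _ _ t0 d0]; move: td; rewrite t0 d0 eqxx.
by move=> x [/vpsi_P x_psi gx]; rewrite !lform_vec5 x_psi -gx gE; split; ring.
Qed.

Lemma facet_le_of g a b t d e :
  (forall x, g x = a * vzp x + b * vzm x + t * vth x + d * vdp x) ->
  (t != 0) || (d != 0) -> (forall y, U y -> g y <= e) ->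
  aff_indep_in (face g e) 3 -> facet_le P g e.
Proof.
move=> gE td valid face3; split; last exact: face_codim1 gE td face3.
have gL y : g y = lform (vec5 0 a b t d) y by rewrite lform_vec5 gE; ring.
by move=> x Px; rewrite gL; apply: conv_lform_le Px => y /valid; rewrite gL.
Qed.

Lemma facet_ge_of g a b t d e :
  (forall x, g x = a * vzp x + b * vzm x + t * vth x + d * vdp x) ->
  (t != 0) || (d != 0) -> (forall y, U y -> e <= g y) ->
  aff_indep_in (face g e) 3 -> facet_ge P g e.
Proof.
move=> gE td valid face3; split; last exact: face_codim1 gE td face3.
have gL y : g y = lform (vec5 0 a b t d) y by rewrite lform_vec5 gE; ring.
by move=> x Px; rewrite gL; apply: conv_lform_ge Px => y /valid; rewrite gL.
Qed.

Lemma facet_thl : facet_ge P (fun x => thl * vzp x + vth x) thl.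
Proof.
apply: (@facet_ge_of _ thl 0 1 0) => [x||y|]; first ring.
- by rewrite oner_eq0.
- by rewrite /P000 /P110 /P101; signs; nra.
apply: (aff_indep_in3 (p0 := x000_lo) (p1 := x110_0) (p2 := x101_lo) (p3 := x101_hi)).
1-4: by split=> //; rewrite !vec5E; ring.
move=> a b c; rewrite !vec5B !vec5Z !vec5D => /vec5_eq0[? ? ? ? ?]; signs.
have b_c : b = - c by lra.
subst b; have : 0 < thl * (dBl - dBu) by nra.
by split; nra.
Qed.

Lemma facet_thu : facet_le P (fun x => thu * vzm x + vth x) thu.
Proof.
apply: (@facet_le_of _ 0 thu 1 0) => [x||y|]; first ring.
- by rewrite oner_eq0.
- by rewrite /P000 /P110 /P101; signs; nra.
apply: (aff_indep_in3 (p0 := x000_hi) (p1 := x101_0) (p2 := x110_lo) (p3 := x110_hi)).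
1-4: by split=> //; rewrite !vec5E; ring.
move=> a b c; rewrite !vec5B !vec5Z !vec5D => /vec5_eq0[? ? ? ? ?]; signs.
have b_c : b = - c by lra.
subst b; have : 0 < thu * (dBu - dBl) by nra.
by split; nra.
Qed.

Lemma facet_dp_ge : facet_ge P (fun x => - (thu * dBl) * vzp x - thl * dBu * vzm x + vdp x) 0.
Proof.
apply: (@facet_ge_of _ (- (thu * dBl)) (- (thl * dBu)) 0 1) => [x||y|]; first ring.
- by rewrite oner_eq0 orbT.
- by rewrite /P000 /P110 /P101; signs; nra.
apply: (aff_indep_in3 (p0 := x000_0) (p1 := x000_hi) (p2 := x110_lo) (p3 := x101_lo)).
1-4: by split=> //; rewrite !vec5E; ring.
move=> a b c; rewrite !vec5B !vec5Z !vec5D => /vec5_eq0[? ? ? ? ?]; signs.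
by split; nra.
Qed.

Lemma facet_dp_le : facet_le P (fun x => - (thu * dBu) * vzp x - thl * dBl * vzm x + vdp x) 0.
Proof.
apply: (@facet_le_of _ (- (thu * dBu)) (- (thl * dBl)) 0 1) => [x||y|]; first ring.
- by rewrite oner_eq0 orbT.
- by rewrite /P000 /P110 /P101; signs; nra.
apply: (aff_indep_in3 (p0 := x000_0) (p1 := x000_hi) (p2 := x110_hi) (p3 := x101_hi)).
1-4: by split=> //; rewrite !vec5E; ring.
move=> a b c; rewrite !vec5B !vec5Z !vec5D => /vec5_eq0[? ? ? ? ?]; signs.
by split; nra.
Qed.

Lemma facet_thu_dBu :
  facet_le P (fun x => thu * dBl * vzp x + thu * dBu * vzm x + dBu * vth x - vdp x)
    (thu * dBu).
Proof.
apply: (@facet_le_of _ (thu * dBl) (thu * dBu) dBu (-1)) => [x||y|]; first ring.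
- by rewrite oppr_eq0 oner_eq0 orbT.
- by rewrite /P000 /P110 /P101; signs; nra.
apply: (aff_indep_in3 (p0 := x000_hi) (p1 := x110_lo) (p2 := x101_0) (p3 := x101_lo)).
1-4: by split=> //; rewrite !vec5E; ring.
move=> a b c; rewrite !vec5B !vec5Z !vec5D => /vec5_eq0[? ? ? ? ?]; signs.
have b_c : b = - c by lra.
by subst b; split; nra.
Qed.

Lemma facet_thu_dBl :
  facet_ge P (fun x => thu * dBu * vzp x + thu * dBl * vzm x + dBl * vth x - vdp x)
    (thu * dBl).
Proof.
apply: (@facet_ge_of _ (thu * dBu) (thu * dBl) dBl (-1)) => [x||y|]; first ring.
- by rewrite oppr_eq0 oner_eq0 orbT.
- by rewrite /P000 /P110 /P101; signs; nra.
apply: (aff_indep_in3 (p0 := x000_hi) (p1 := x110_hi) (p2 := x101_0) (p3 := x101_hi)).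
1-4: by split=> //; rewrite !vec5E; ring.
move=> a b c; rewrite !vec5B !vec5Z !vec5D => /vec5_eq0[? ? ? ? ?]; signs.
have b_c : b = - c by lra.
by subst b; split; nra.
Qed.

Lemma facet_thl_dBu :
  facet_ge P (fun x => thl * dBu * vzp x + thl * dBl * vzm x + dBu * vth x - vdp x)
    (thl * dBu).
Proof.
apply: (@facet_ge_of _ (thl * dBu) (thl * dBl) dBu (-1)) => [x||y|]; first ring.
- by rewrite oppr_eq0 oner_eq0 orbT.
- by rewrite /P000 /P110 /P101; signs; nra.
apply: (aff_indep_in3 (p0 := x000_lo) (p1 := x110_0) (p2 := x110_hi) (p3 := x101_hi)).
1-4: by split=> //; rewrite !vec5E; ring.
move=> a b c; rewrite !vec5B !vec5Z !vec5D => /vec5_eq0[? ? ? ? ?]; signs.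
have a_b : a = - b by lra.
by subst a; split; nra.
Qed.

Lemma facet_thl_dBl :
  facet_le P (fun x => thl * dBl * vzp x + thl * dBu * vzm x + dBl * vth x - vdp x)
    (thl * dBl).
Proof.
apply: (@facet_le_of _ (thl * dBl) (thl * dBu) dBl (-1)) => [x||y|]; first ring.
- by rewrite oppr_eq0 oner_eq0 orbT.
- by rewrite /P000 /P110 /P101; signs; nra.
apply: (aff_indep_in3 (p0 := x000_lo) (p1 := x110_0) (p2 := x110_lo) (p3 := x101_lo)).
1-4: by split=> //; rewrite !vec5E; ring.
move=> a b c; rewrite !vec5B !vec5Z !vec5D => /vec5_eq0[? ? ? ? ?]; signs.
have a_b : a = - b by lra.
by subst a; split; nra.
Qed.
End Facets.

Theorem theorem1 (R : realFieldType) (thl thu dBl dBu : R)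
  (hthl : thl < 0) (hthu : 0 < thu) (hdBl : dBl < 0) (hdBu : 0 < dBu) :
  let P := Pfacts thl thu dBl dBu in
    facet_ge P (fun x => thl * vzp x + vth x) thl /\
      facet_le P (fun x => thu * vzm x + vth x) thu /\
      facet_ge P (fun x => - (thu * dBl) * vzp x - thl * dBu * vzm x + vdp x) 0 /\
      facet_le P (fun x => - (thu * dBu) * vzp x - thl * dBl * vzm x + vdp x) 0 /\
      facet_le P (fun x => thu * dBl * vzp x + thu * dBu * vzm x + dBu * vth x - vdp x)
               (thu * dBu) /\
      facet_ge P (fun x => thu * dBu * vzp x + thu * dBl * vzm x + dBl * vth x - vdp x)
               (thu * dBl) /\
      facet_ge P (fun x => thl * dBu * vzp x + thl * dBl * vzm x + dBu * vth x - vdp x)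
               (thl * dBu) /\
      facet_le P (fun x => thl * dBl * vzp x + thl * dBu * vzm x + dBl * vth x - vdp x)
               (thl * dBl).
Proof.
move=> P.
split; first exact: facet_thl.
split; first exact: facet_thu.
split; first exact: facet_dp_ge.
split; first exact: facet_dp_le.
split; first exact: facet_thu_dBu.
split; first exact: facet_thu_dBl.
split; first exact: facet_thl_dBu.
exact: facet_thl_dBl.
Qed.
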